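(* Let $\alpha\in(1,2)$ and let $p\ge2$ be an even integer (so $p>\alpha$). Set $a:=\left(\pi^4/48\right)^{1/\alpha}$. Then $$f^{p,0}(\theta)\le f^{p,\alpha}(\theta)\qquad\text{for all }\theta\text{ with }|\theta|\in[a,\pi].$$
   Context: For real $\beta\ge0$ and integer $p\ge 2$, $f^{p,\beta}(\theta)=\sum_{l\in\mathbb Z}|\theta+2l\pi|^{\beta}\left(\frac{\sin(\theta/2+l\pi)}{\theta/2+l\pi}\right)^{p+1}$ (with $\frac{\sin x}{x}:=1$ at $x=0$ and $|x|^0:=1$). *)

From Stdlib Require Import Reals ZArith.
From Coquelicot Require Import Coquelicot.
Open Scope R_scope.

Definition sinc (x : R) : R := if Req_EM_T x 0 then 1 else sin x / x.

(* |x|^beta for real beta >= 0, with the convention |x|^0 := 1 (also at x = 0)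
   and 0^beta = 0 for beta > 0. *)
Definition abspow (x beta : R) : R :=
  if Req_EM_T beta 0 then 1
  else if Req_EM_T x 0 then 0 else Rpower (Rabs x) beta.

Definition fterm (p : nat) (beta theta : R) (l : Z) : R :=
  abspow (theta + 2 * IZR l * PI) beta * (sinc (theta / 2 + IZR l * PI)) ^ (p + 1).

(* f^{p,beta}(theta) = sum_{l in Z} fterm l, written as the series over n : nat
   of the paired terms l = n and l = -(n+1). *)
Definition fpb (p : nat) (beta theta : R) : R :=
  Series (fun n : nat => fterm p beta theta (Z.of_nat n)
                         + fterm p beta theta (- (Z.of_nat n + 1))%Z).

(** Let 1 < alpha < 2, p >= 2 even, q = p + 1 (odd) and x = theta / 2.
    For 0 < theta <= pi the summands of f^{p,b}(theta) of index l = n and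
    l = -(n+1) equal (-1)^n sin(x)^q K_b(x + n pi) and
    (-1)^n sin(x)^q K_b((n+1) pi - x), where K_b(t) = (2t)^b / t^q.  Hence
    f^{p,b}(theta) = sin(x)^q * sum_n (-1)^n u_b(n) with
    u_b(n) = K_b(x + n pi) + K_b((n+1) pi - x): an alternating series whose
    terms decrease to 0, because K_b decreases for 0 <= b <= 2 < q.
    The differences d(n) = u_alpha(n) - u_0(n) decrease as well: K_alpha - K_0
    decreases on [pi/2, +oo), and the one comparison left, K_alpha - K_0 at
    2 pi - x against x, holds as soon as theta^alpha >= 3/2, which the
    threshold (pi^4/48)^(1/alpha) guarantees.  The Leibniz bound for the
    alternating series of d then gives f^{p,alpha} - f^{p,0} >= 0.
    Negative theta reduce to positive ones: f^{p,b}(-theta) is the same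
    two-sided sum paired differently, and both pairings have the same sum
    because the individual terms tend to 0. *)

From Stdlib Require Import Reals ZArith Arith Lra Lia.
From Coquelicot Require Import Coquelicot.
Open Scope R_scope.

Lemma PI_gt3 : 3 < PI.
Proof. generalize PI2_3_2; lra. Qed.

Lemma Rpower_pos (x y : R) : 0 < Rpower x y.
Proof. apply exp_pos. Qed.

Lemma Rpower_le_pow2 (r b : R) : 1 <= r -> b <= 2 -> Rpower r b <= r ^ 2.
Proof.
  intros Hr Hb. rewrite <- Rpower_pow by lra. apply Rle_Rpower; auto; simpl; lra.
Qed.

Lemma div_mul_le (a b c D : R) : 0 < D -> 0 < c -> a <= b * c -> a / (D * c) <= b / D.
Proof.
  intros HD Hc H. unfold Rdiv. rewrite Rinv_mult.
  apply Rmult_le_reg_r with (D * c); [nra|].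
  replace (a * (/ D * / c) * (D * c)) with a by (field; lra).
  replace (b * / D * (D * c)) with (b * c) by (field; lra). exact H.
Qed.

Lemma abspow_pos (z b : R) : 0 < z -> abspow z b = Rpower z b.
Proof.
  intros Hz; unfold abspow.
  destruct (Req_EM_T b 0) as [->|_].
  - rewrite Rpower_O; auto.
  - destruct (Req_EM_T z 0); [lra|]. rewrite Rabs_pos_eq; lra.
Qed.

Lemma abspow_opp (z b : R) : abspow (- z) b = abspow z b.
Proof.
  unfold abspow.
  destruct (Req_EM_T b 0); auto.
  destruct (Req_EM_T (- z) 0); destruct (Req_EM_T z 0); try lra.
  rewrite Rabs_Ropp; auto.
Qed.

Lemma sinc_opp (z : R) : sinc (- z) = sinc z.
Proof.
  unfold sinc.
  destruct (Req_EM_T (- z) 0); destruct (Req_EM_T z 0); try lra.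
  rewrite sin_neg. field. auto.
Qed.

Lemma sin_add_nPI (n : nat) (x : R) : sin (x + INR n * PI) = (-1) ^ n * sin x.
Proof.
  induction n as [|n IH].
  - simpl. rewrite Rmult_0_l, Rplus_0_r. ring.
  - rewrite S_INR. replace (x + (INR n + 1) * PI) with ((x + INR n * PI) + PI) by ring.
    rewrite neg_sin, IH. simpl. ring.
Qed.

Lemma sin_sub_SnPI (n : nat) (x : R) : sin (x - (INR n + 1) * PI) = - ((-1) ^ n * sin x).
Proof.
  replace (x - (INR n + 1) * PI) with (- (- x + INR (S n) * PI)) by (rewrite S_INR; ring).
  rewrite sin_neg, sin_add_nPI, sin_neg. simpl. ring.
Qed.

Lemma odd_pow_sign (q n : nat) (y : R) :
  (-1) ^ q = -1 -> ((-1) ^ n * y) ^ q = (-1) ^ n * y ^ q.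
Proof.
  intros Hq. rewrite Rpow_mult_distr. f_equal.
  rewrite <- pow_mult, Nat.mul_comm, pow_mult, Hq. auto.
Qed.

Lemma even_succ_sign (p : nat) : Nat.Even p -> (-1) ^ (p + 1) = -1.
Proof.
  intros [k ->]. rewrite pow_add, pow_mult.
  replace ((-1) ^ 2) with 1 by (simpl; ring). rewrite pow1. simpl; ring.
Qed.

(* Up to the factor |sin(theta/2)|^q, the modulus of the summand of
   f^{p,b}(theta) at t = |theta/2 + l pi|, with q = p + 1. *)
Definition kernel (q : nat) (b t : R) : R := Rpower (2 * t) b / t ^ q.

Lemma kernel_nonneg (q : nat) (b t : R) : 0 < t -> 0 <= kernel q b t.
Proof.
  intros Ht. apply Rle_mult_inv_pos; [left; apply Rpower_pos | apply pow_lt; auto].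
Qed.

Lemma kernel_0 (q : nat) (t : R) : 0 < t -> kernel q 0 t = 1 / t ^ q.
Proof. intros; unfold kernel. rewrite Rpower_O; auto; lra. Qed.

Lemma kernel_scale (q : nat) (b t r : R) : 0 < t -> 0 < r ->
  kernel q b (t * r) = Rpower (2 * t) b * Rpower r b / (t ^ q * r ^ q).
Proof.
  intros Ht Hr. unfold kernel. rewrite Rpow_mult_distr, Rpower_mult_distr by lra.
  f_equal. f_equal. ring.
Qed.

Lemma kernel_antitone (q : nat) (b t1 t2 : R) : b <= 2 -> (3 <= q)%nat -> 0 < t1 <= t2 ->
  kernel q b t2 <= kernel q b t1.
Proof.
  intros Hb Hq Ht.
  set (r := t2 / t1).
  assert (Hr : 1 <= r) by (unfold r; apply Rmult_le_reg_r with t1; [lra|]; field_simplify; lra).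
  replace t2 with (t1 * r) by (unfold r; field; lra).
  rewrite kernel_scale by lra. unfold kernel.
  apply div_mul_le; try (apply pow_lt; lra).
  pose proof (Rpower_le_pow2 r b Hr Hb).
  pose proof (Rle_pow r 2 q Hr ltac:(lia)).
  pose proof (Rpower_pos (2 * t1) b).
  nra.
Qed.

Lemma kernel_le_inv (q : nat) (b t : R) : b <= 2 -> (3 <= q)%nat -> 1 <= t ->
  kernel q b t <= 4 / t.
Proof.
  intros Hb Hq Ht. unfold kernel.
  pose proof (Rpower_le_pow2 (2 * t) b ltac:(lra) Hb).
  pose proof (Rle_pow t 3 q Ht Hq).
  assert (0 < t ^ q) by (apply pow_lt; lra).
  apply Rmult_le_reg_r with (t ^ q); auto.
  replace (Rpower (2 * t) b / t ^ q * t ^ q) with (Rpower (2 * t) b) by (field; lra).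
  apply Rle_trans with ((2 * t) ^ 2); auto.
  apply Rle_trans with (4 / t * t ^ 3).
  - right. simpl. field. lra.
  - apply Rmult_le_compat_l; auto. apply Rle_mult_inv_pos; lra.
Qed.

Lemma is_lim_seq_inv_succ : is_lim_seq (fun n => / (INR n + 1)) 0.
Proof.
  replace (Finite 0) with (Rbar_inv p_infty) by reflexivity.
  apply is_lim_seq_inv; [|discriminate].
  apply is_lim_seq_ext with (fun n => INR (S n)); [intros; apply S_INR|].
  apply (is_lim_seq_incr_1 INR p_infty). apply is_lim_seq_INR.
Qed.

Lemma kernel_cv0 (q : nat) (b : R) (w : nat -> R) :
  b <= 2 -> (3 <= q)%nat -> (forall n, INR n + 1 <= w n) ->
  is_lim_seq (fun n => kernel q b (w n)) 0.
Proof.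
  intros Hb Hq Hw.
  apply is_lim_seq_le_le with (fun _ => 0) (fun n => 4 * / (INR n + 1)).
  - intros n. pose proof (pos_INR n). pose proof (Hw n). split.
    + apply kernel_nonneg; lra.
    + eapply Rle_trans; [apply kernel_le_inv; auto; lra|].
      apply Rmult_le_compat_l; [lra|]. apply Rinv_le_contravar; lra.
  - apply is_lim_seq_const.
  - replace (Finite 0) with (Rbar_mult 4 0) by (simpl; f_equal; ring).
    apply is_lim_seq_scal_l. apply is_lim_seq_inv_succ.
Qed.

Lemma kernel_gap_antitone (q : nat) (a t1 t2 : R) :
  1 < a < 2 -> (3 <= q)%nat -> PI / 2 <= t1 <= t2 ->
  kernel q a t2 - kernel q 0 t2 <= kernel q a t1 - kernel q 0 t1.
Proof.
  intros Ha Hq Ht. pose proof PI_gt3.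
  set (r := t2 / t1).
  assert (Hr : 1 <= r) by (unfold r; apply Rmult_le_reg_r with t1; [lra|]; field_simplify; lra).
  replace t2 with (t1 * r) by (unfold r; field; lra).
  rewrite kernel_scale by lra. rewrite !kernel_0 by nra. unfold kernel.
  (* (2 t1)^a >= 2 t1 >= pi > 3 *)
  assert (HE1 : 3 <= Rpower (2 * t1) a).
  { apply Rle_trans with (Rpower (2 * t1) 1); [rewrite Rpower_1; lra|].
    apply Rle_Rpower; lra. }
  set (E1 := Rpower (2 * t1) a) in *.
  assert (0 < t1 ^ q) by (apply pow_lt; lra).
  assert (0 < r ^ q) by (apply pow_lt; lra).
  replace (E1 * Rpower r a / (t1 ^ q * r ^ q) - 1 / (t1 * r) ^ q)
    with ((E1 * Rpower r a - 1) / (t1 ^ q * r ^ q)) by (rewrite Rpow_mult_distr; field; lra).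
  replace (E1 / t1 ^ q - 1 / t1 ^ q) with ((E1 - 1) / t1 ^ q) by (field; lra).
  apply div_mul_le; auto.
  pose proof (Rpower_le_pow2 r a Hr ltac:(lra)).
  pose proof (Rle_pow r 3 q Hr Hq).
  assert (E1 * r ^ 2 - 1 <= (E1 - 1) * r ^ 3).
  { simpl. assert (0 <= (r - 1) * (E1 * r * r - r * r - r - 1)) by (apply Rmult_le_pos; nra).
    nra. }
  nra.
Qed.

(* The comparison of the gap at 2 pi - x and at x, for 0 < x <= pi/2; this is
   where the lower bound (2x)^a >= 3/2 is needed. *)
Lemma kernel_gap_far (q : nat) (a x : R) :
  1 < a < 2 -> (3 <= q)%nat -> 0 < x <= PI / 2 -> 3 / 2 <= Rpower (2 * x) a ->
  kernel q a (2 * PI - x) - kernel q 0 (2 * PI - x) <= kernel q a x - kernel q 0 x.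
Proof.
  intros Ha Hq Hx HE. pose proof PI_gt3.
  pose proof (kernel_nonneg q 0 (2 * PI - x) ltac:(lra)).
  set (r := (2 * PI - x) / x).
  assert (Hr : 3 <= r) by (unfold r; apply Rmult_le_reg_r with x; [lra|]; field_simplify; lra).
  replace (2 * PI - x) with (x * r) in * by (unfold r; field; lra).
  apply Rle_trans with (kernel q a (x * r)); [lra|].
  rewrite kernel_scale, kernel_0 by lra. unfold kernel.
  set (E1 := Rpower (2 * x) a) in *.
  assert (0 < x ^ q) by (apply pow_lt; lra).
  replace (E1 / x ^ q - 1 / x ^ q) with ((E1 - 1) / x ^ q) by (field; lra).
  apply div_mul_le; auto; [apply pow_lt; lra|].
  pose proof (Rpower_le_pow2 r a ltac:(lra) ltac:(lra)).
  pose proof (Rle_pow r 3 q ltac:(lra) Hq).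
  pose proof (Rpower_pos (2 * x) a).
  assert (E1 * Rpower r a <= E1 * r ^ 2) by (apply Rmult_le_compat_l; lra).
  (* (E1 - 1) r >= E1 because E1 >= 3/2 and r >= 3 *)
  assert (E1 * r ^ 2 <= (E1 - 1) * r ^ 3).
  { simpl. assert (0 <= r * r * ((E1 - 1) * r - E1)) by (apply Rmult_le_pos; nra). nra. }
  assert ((E1 - 1) * r ^ 3 <= (E1 - 1) * r ^ q) by (apply Rmult_le_compat_l; lra).
  lra.
Qed.

(** ** The alternating-series form of f^{p,b} *)

(* The weight of the n-th pair of summands, (l = n, l = -(n+1)), at x = theta/2. *)
Definition pair_weight (q : nat) (b x : R) (n : nat) : R :=
  kernel q b (x + INR n * PI) + kernel q b ((INR n + 1) * PI - x).

Lemma pair_weight_decreasing (q : nat) (b x : R) :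
  b <= 2 -> (3 <= q)%nat -> 0 < x <= PI / 2 -> Un_decreasing (pair_weight q b x).
Proof.
  intros Hb Hq Hx n. pose proof PI_gt3. pose proof (pos_INR n). unfold pair_weight.
  rewrite S_INR.
  pose proof (kernel_antitone q b (x + INR n * PI) (x + (INR n + 1) * PI) Hb Hq ltac:(nra)).
  pose proof (kernel_antitone q b ((INR n + 1) * PI - x) ((INR n + 1 + 1) * PI - x)
                Hb Hq ltac:(nra)).
  lra.
Qed.

Lemma pair_weight_cv0 (q : nat) (b x : R) :
  b <= 2 -> (3 <= q)%nat -> 0 < x <= PI / 2 -> Un_cv (pair_weight q b x) 0.
Proof.
  intros Hb Hq Hx. pose proof PI_gt3. apply is_lim_seq_Reals.
  apply is_lim_seq_incr_1. unfold pair_weight.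
  replace (Finite 0) with (Finite (0 + 0)) by (f_equal; ring).
  apply is_lim_seq_plus'; apply kernel_cv0; auto;
    intros n; pose proof (pos_INR n); rewrite S_INR; nra.
Qed.

Lemma pair_weight_gap_decreasing (q : nat) (a x : R) :
  1 < a < 2 -> (3 <= q)%nat -> 0 < x <= PI / 2 -> 3 / 2 <= Rpower (2 * x) a ->
  Un_decreasing (fun n => pair_weight q a x n - pair_weight q 0 x n).
Proof.
  intros Ha Hq Hx HE n. pose proof PI_gt3. unfold pair_weight.
  destruct n as [|m].
  - replace (INR 1) with 1 by reflexivity. replace (INR 0) with 0 by reflexivity.
    replace (x + 1 * PI) with (x + PI) by ring. replace (x + 0 * PI) with x by ring.
    replace ((0 + 1) * PI - x) with (PI - x) by ring.
    replace ((1 + 1) * PI - x) with (2 * PI - x) by ring.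
    pose proof (kernel_gap_antitone q a (PI - x) (x + PI) Ha Hq ltac:(lra)).
    pose proof (kernel_gap_far q a x Ha Hq Hx HE).
    lra.
  - pose proof (pos_INR m). rewrite !S_INR.
    pose proof (kernel_gap_antitone q a (x + (INR m + 1) * PI) (x + (INR m + 1 + 1) * PI)
                  Ha Hq ltac:(nra)).
    pose proof (kernel_gap_antitone q a ((INR m + 1 + 1) * PI - x)
                  ((INR m + 1 + 1 + 1) * PI - x) Ha Hq ltac:(nra)).
    lra.
Qed.

Section PairedSeries.

Variable p : nat.
Hypothesis p_ge2 : (2 <= p)%nat.
Hypothesis p_even : Nat.Even p.

Let q_ge3 : (3 <= p + 1)%nat.
Proof. lia. Qed.

Lemma fterm_nat (b th : R) (n : nat) :
  0 < th / 2 + INR n * PI ->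
  fterm p b th (Z.of_nat n) =
  (-1) ^ n * (sin (th / 2) ^ (p + 1) * kernel (p + 1) b (th / 2 + INR n * PI)).
Proof.
  intros Ht. unfold fterm, kernel. rewrite <- INR_IZR_INZ.
  set (t := th / 2 + INR n * PI) in *.
  replace (th + 2 * INR n * PI) with (2 * t) by (unfold t; field).
  rewrite abspow_pos by lra.
  assert (Hs : sinc t = (-1) ^ n * sin (th / 2) * / t).
  { unfold sinc. destruct (Req_EM_T t 0); [lra|]. unfold t. rewrite sin_add_nPI. auto. }
  rewrite Hs, Rpow_mult_distr, odd_pow_sign, pow_inv by (apply even_succ_sign; auto).
  unfold Rdiv. ring.
Qed.

Lemma fterm_neg_nat (b th : R) (n : nat) :
  0 < (INR n + 1) * PI - th / 2 ->
  fterm p b th (- (Z.of_nat n + 1))%Z =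
  (-1) ^ n * (sin (th / 2) ^ (p + 1) * kernel (p + 1) b ((INR n + 1) * PI - th / 2)).
Proof.
  intros Ht. unfold fterm, kernel.
  rewrite opp_IZR, plus_IZR, <- INR_IZR_INZ.
  set (t := (INR n + 1) * PI - th / 2) in *.
  replace (th + 2 * - (INR n + 1) * PI) with (- (2 * t)) by (unfold t; field).
  rewrite abspow_opp, abspow_pos by lra.
  assert (Hs : sinc (th / 2 + - (INR n + 1) * PI) = (-1) ^ n * sin (th / 2) * / t).
  { unfold sinc. destruct (Req_EM_T _ 0) as [e|ne]; [unfold t in *; lra|].
    replace (th / 2 + - (INR n + 1) * PI) with (th / 2 - (INR n + 1) * PI) by ring.
    rewrite sin_sub_SnPI. unfold t. field. unfold t in ne. lra. }
  rewrite Hs, Rpow_mult_distr, odd_pow_sign, pow_inv by (apply even_succ_sign; auto).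
  unfold Rdiv. ring.
Qed.

Lemma fpb_is_alternating (b th l : R) : 0 <= b <= 2 -> 0 < th <= PI ->
  Un_cv (fun N => sum_f_R0 (tg_alt (pair_weight (p + 1) b (th / 2))) N) l ->
  is_series (fun n => fterm p b th (Z.of_nat n) + fterm p b th (- (Z.of_nat n + 1))%Z)
    (sin (th / 2) ^ (p + 1) * l).
Proof.
  intros Hb Hth Hl. pose proof PI_gt3.
  apply is_series_ext
    with (fun n => sin (th / 2) ^ (p + 1) * tg_alt (pair_weight (p + 1) b (th / 2)) n).
  - intros n. pose proof (pos_INR n).
    rewrite fterm_nat, fterm_neg_nat by nra. unfold tg_alt, pair_weight.
    (* the goal lives in Coquelicot's ring carrier; restate it over R for ring *)
    match goal with |- ?l = ?r => change (@eq R l r) end.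
    ring.
  - exact (is_series_scal_l (K:=R_AbsRing) (V:=R_NormedModule) _ _ _
             (proj2 (is_series_Reals _ _) Hl)).
Qed.

Lemma fterm_cv0 (b th : R) : 0 <= b <= 2 -> 0 < th <= PI ->
  is_lim_seq (fun n => fterm p b th (Z.of_nat n + 1)%Z) 0 /\
  is_lim_seq (fun n => fterm p b th (- (Z.of_nat n + 1))%Z) 0.
Proof.
  intros Hb Hth. pose proof PI_gt3.
  assert (HS : 0 <= sin (th / 2) ^ (p + 1)) by (apply pow_le, sin_ge_0; lra).
  assert (Habs : forall s k, 0 < k ->
            Rabs ((-1) ^ s * (sin (th / 2) ^ (p + 1) * kernel (p + 1) b k))
            = sin (th / 2) ^ (p + 1) * kernel (p + 1) b k).
  { intros s k Hk. rewrite Rabs_mult, pow_1_abs, Rmult_1_l, Rabs_pos_eq; [auto|].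
    apply Rmult_le_pos; auto. apply kernel_nonneg; auto. }
  assert (Hlim : forall w : nat -> R, (forall n, INR n + 1 <= w n) ->
            is_lim_seq (fun n => sin (th / 2) ^ (p + 1) * kernel (p + 1) b (w n)) 0).
  { intros w Hw. replace (Finite 0) with (Rbar_mult (sin (th / 2) ^ (p + 1)) 0)
      by (simpl; f_equal; ring).
    apply is_lim_seq_scal_l, kernel_cv0; auto; lra. }
  split; apply is_lim_seq_abs_0.
  - apply is_lim_seq_ext
      with (fun n => sin (th / 2) ^ (p + 1) * kernel (p + 1) b (th / 2 + INR (S n) * PI)).
    + intros n. pose proof (pos_INR (S n)).
      replace (Z.of_nat n + 1)%Z with (Z.of_nat (S n)) by lia.
      rewrite fterm_nat, Habs by nra. reflexivity.
    + apply Hlim. intros n. pose proof (pos_INR n). rewrite S_INR. nra.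
  - apply is_lim_seq_ext
      with (fun n => sin (th / 2) ^ (p + 1) * kernel (p + 1) b ((INR n + 1) * PI - th / 2)).
    + intros n. pose proof (pos_INR n). rewrite fterm_neg_nat, Habs by nra. reflexivity.
    + apply Hlim. intros n. pose proof (pos_INR n). nra.
Qed.

Lemma fpb_mono_pos (a th : R) : 1 < a < 2 -> 0 < th <= PI -> 3 / 2 <= Rpower th a ->
  fpb p 0 th <= fpb p a th.
Proof.
  intros Ha Hth HE. pose proof PI_gt3.
  set (x := th / 2).
  assert (Hx : 0 < x <= PI / 2) by (unfold x; lra).
  assert (HEx : 3 / 2 <= Rpower (2 * x) a) by (unfold x; replace (2 * (th / 2)) with th by field; auto).
  set (ua := pair_weight (p + 1) a x). set (u0 := pair_weight (p + 1) 0 x).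
  destruct (alternated_series ua (pair_weight_decreasing _ a x ltac:(lra) q_ge3 Hx)
              (pair_weight_cv0 _ a x ltac:(lra) q_ge3 Hx)) as [la Hla].
  destruct (alternated_series u0 (pair_weight_decreasing _ 0 x ltac:(lra) q_ge3 Hx)
              (pair_weight_cv0 _ 0 x ltac:(lra) q_ge3 Hx)) as [l0 Hl0].
  unfold fpb.
  rewrite (is_series_unique _ _ (fpb_is_alternating a th la ltac:(lra) Hth Hla)).
  rewrite (is_series_unique _ _ (fpb_is_alternating 0 th l0 ltac:(lra) Hth Hl0)).
  apply Rmult_le_compat_l; [apply pow_le, sin_ge_0; unfold x; lra|].
  (* Leibniz bound for the alternating series of the gaps d = ua - u0 *)
  set (d := fun n => ua n - u0 n).
  assert (Hd : Un_decreasing d) by (apply pair_weight_gap_decreasing; auto).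
  assert (Hdcv : Un_cv d 0).
  { replace 0 with (0 - 0) by ring.
    apply CV_minus; apply pair_weight_cv0; auto; lra. }
  assert (Hsum : Un_cv (fun N => sum_f_R0 (tg_alt d) N) (la - l0)).
  { apply is_lim_seq_Reals.
    apply is_lim_seq_ext
      with (fun N => sum_f_R0 (tg_alt ua) N - sum_f_R0 (tg_alt u0) N).
    - intros N. rewrite <- minus_sum. apply sum_eq. intros i _. unfold tg_alt, d. ring.
    - apply is_lim_seq_minus'; apply is_lim_seq_Reals; auto. }
  destruct (alternated_series_ineq d (la - l0) 0 Hd Hdcv Hsum) as [Hi _].
  change (sum_f_R0 (tg_alt d) (S (2 * 0))) with (tg_alt d 0 + tg_alt d 1) in Hi.
  unfold tg_alt in Hi. rewrite pow_O, pow_1 in Hi.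
  pose proof (Hd 0%nat). lra.
Qed.

(** ** Symmetry in theta *)

Lemma is_series_repair (F : Z -> R) (l : R) :
  is_series (fun n => F (Z.of_nat n) + F (- (Z.of_nat n + 1))%Z) l ->
  is_lim_seq (fun n => F (Z.of_nat n + 1)%Z) 0 ->
  is_lim_seq (fun n => F (- (Z.of_nat n + 1))%Z) 0 ->
  is_series (fun n => F (- Z.of_nat n)%Z + F (Z.of_nat n + 1)%Z) l.
Proof.
  intros Hser H1 H2.
  (* the two families of partial sums differ by a boundary term *)
  assert (E : forall N, sum_n (fun n => F (- Z.of_nat n)%Z + F (Z.of_nat n + 1)%Z) N =
     sum_n (fun n => F (Z.of_nat n) + F (- (Z.of_nat n + 1))%Z) N
     + (F (Z.of_nat N + 1)%Z - F (- (Z.of_nat N + 1))%Z)).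
  { induction N as [|N IH].
    - rewrite !sum_O. simpl. ring.
    - rewrite !sum_Sn, IH, Nat2Z.inj_succ. unfold Z.succ, plus. simpl. ring. }
  unfold is_series.
  change (is_lim_seq (sum_n (fun n => F (- Z.of_nat n)%Z + F (Z.of_nat n + 1)%Z)) l).
  apply is_lim_seq_ext
    with (fun N => sum_n (fun n => F (Z.of_nat n) + F (- (Z.of_nat n + 1))%Z) N
                   + (F (Z.of_nat N + 1)%Z - F (- (Z.of_nat N + 1))%Z));
    [intros; symmetry; apply E|].
  replace (Finite l) with (Finite (l + (0 - 0))) by (f_equal; ring).
  apply is_lim_seq_plus'; [exact Hser|]. apply is_lim_seq_minus'; auto.
Qed.

Lemma fterm_opp (b th : R) (l : Z) : fterm p b (- th) l = fterm p b th (- l).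
Proof.
  unfold fterm. rewrite opp_IZR.
  replace (- th + 2 * IZR l * PI) with (- (th + 2 * - IZR l * PI)) by ring.
  rewrite abspow_opp.
  replace (- th / 2 + IZR l * PI) with (- (th / 2 + - IZR l * PI)) by field.
  rewrite sinc_opp. reflexivity.
Qed.

Lemma fpb_opp (b th : R) : 0 <= b <= 2 -> 0 < th <= PI -> fpb p b (- th) = fpb p b th.
Proof.
  intros Hb Hth. pose proof PI_gt3.
  assert (Hx : 0 < th / 2 <= PI / 2) by lra.
  destruct (alternated_series _ (pair_weight_decreasing _ b _ ltac:(lra) q_ge3 Hx)
              (pair_weight_cv0 _ b _ ltac:(lra) q_ge3 Hx)) as [l Hl].
  pose proof (fpb_is_alternating b th l Hb Hth Hl) as Hs.
  destruct (fterm_cv0 b th Hb Hth) as [L1 L2].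
  unfold fpb at 2. rewrite (is_series_unique _ _ Hs).
  unfold fpb. apply is_series_unique.
  eapply is_series_ext; [|exact (is_series_repair _ _ Hs L1 L2)].
  intros n. simpl. rewrite !fterm_opp, Z.opp_involutive. reflexivity.
Qed.

End PairedSeries.

(* Above the threshold (pi^4/48)^(1/alpha), t^alpha >= pi^4/48 > 3/2. *)
Lemma threshold_power (alpha t : R) : 0 < alpha ->
  Rpower (PI ^ 4 / 48) (/ alpha) <= t -> 3 / 2 <= Rpower t alpha.
Proof.
  intros Ha Ht. pose proof PI_gt3.
  assert (Hpi4 : 81 <= PI ^ 4) by (simpl; assert (9 <= PI * PI) by nra; nra).
  assert (Hl : Rpower (Rpower (PI ^ 4 / 48) (/ alpha)) alpha <= Rpower t alpha)
    by (apply Rle_Rpower_l; [lra|]; split; [apply Rpower_pos|auto]).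
  rewrite Rpower_mult, Rinv_l, Rpower_1 in Hl by lra. lra.
Qed.

Theorem proposition5p5 (alpha : R) (p : nat) (theta : R) :
  1 < alpha < 2 ->
  (2 <= p)%nat -> Nat.Even p ->
  Rpower (PI ^ 4 / 48) (/ alpha) <= Rabs theta <= PI ->
  fpb p 0 theta <= fpb p alpha theta.
Proof.
  intros Ha Hp Hev Hth.
  pose proof (Rpower_pos (PI ^ 4 / 48) (/ alpha)).
  assert (HE : 3 / 2 <= Rpower (Rabs theta) alpha) by (apply threshold_power; lra).
  destruct (Rle_lt_dec 0 theta) as [Hge|Hlt].
  - rewrite Rabs_pos_eq in Hth, HE by auto.
    apply fpb_mono_pos; auto; lra.
  - rewrite Rabs_left in Hth, HE by auto.
    replace theta with (- (- theta)) by ring.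
    rewrite !(fpb_opp p Hp Hev _ (- theta)) by lra.
    apply fpb_mono_pos; auto; lra.
Qed.
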